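(* Let $\mathfrak g\xrightarrow{\mu}\mathfrak h$ be a crossed module of Lie algebras, $\phi:W\to V$ linear, $\rho$ a 2-representation on $\phi$, and $r\ge1$. Then, as maps $C^{p,q}_r(\mathfrak g_1,\phi)\to C^{p+1,q+1}_r(\mathfrak g_1,\phi)$, $$\delta^{(r)}\partial-\partial\delta^{(r)}=\delta_{(1)}\circ\Delta+\Delta\circ\delta_{(1)}.$$
   Context: Crossed module: Lie algebras $\mathfrak g,\mathfrak h$, Lie homomorphism $\mu$, action $\mathcal L:\mathfrak h\to\mathrm{Der}(\mathfrak g)$ with $\mu(\mathcal L_yx)=[y,\mu(x)]$, $\mathcal L_{\mu(x_0)}x_1=[x_0,x_1]$; $\mathfrak g\oplus_{\mathcal L}\mathfrak h$ has bracket $[(x_0,y_0),(x_1,y_1)]=([x_0,x_1]+\mathcal L_{y_0}x_1-\mathcal L_{y_1}x_0,[y_0,y_1])$. 2-representation: linear $\rho_0^1:\mathfrak h\to\mathfrak{gl}(W)$, $\rho_0^0:\mathfrak h\to\mathfrak{gl}(V)$, $\rho_1:\mathfrak g\to\mathrm{Hom}(V,W)$ with $\rho_0^1,\rho_0^0$ representations, $\phi\rho_0^1(y)=\rho_0^0(y)\phi$, $\rho_1([x_0,x_1])=\rho_1(x_0)\phi\rho_1(x_1)-\rho_1(x_1)\phi\rho_1(x_0)$, $\rho_0^0(\mu(x))=\phi\rho_1(x)$, $\rho_0^1(\mu(x))=\rho_1(x)\phi$, $\rho_1(\mathcal L_yx)=\rho_0^1(y)\rho_1(x)-\rho_1(x)\rho_0^0(y)$.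 $\mathfrak g_0=\mathfrak h$; for $p\ge1$, $\mathfrak g_p=\mathfrak g^p\oplus\mathfrak h$, elements $(x^0,\dots,x^{p-1};y)$, a Lie algebra via identification with composable strings $(a_0,\dots,a_{p-1})\in(\mathfrak g\oplus_{\mathcal L}\mathfrak h)^p$, $a_j=(x^j,y+\sum_{k>j}\mu(x^k))$, componentwise bracket. Face maps $\partial_k:\mathfrak g_{p+1}\to\mathfrak g_p$: $\partial_0(x^0,\dots,x^p;y)=(x^1,\dots,x^p;y)$, $\partial_k(\dots)=(x^0,\dots,x^{k-1}+x^k,\dots,x^p;y)$ ($0<k\le p$), $\partial_{p+1}(\dots)=(x^0,\dots,x^{p-1};y+\mu(x^p))$, componentwise on tuples; $\hat t_p(x^0,\dots,x^{p-1};y)=y+\sum\mu(x^j)$. $X(j),X(m,n)$: removal of entries. $C^{p,q}_r=\bigwedge^q\mathfrak g_p^*\otimes\bigwedge^r\mathfrak g^*\otimes W$ ($r\ge1$), $C^{p,q}_0=\bigwedge^q\mathfrak g_p^*\otimes V$, elements $\omega(\Xi;Z)$. $\delta^{(r)}\omega(\xi_0,\dots,\xi_q;Z)=\sum_j(-1)^j(\rho^{(r)}(\hat t_p(\xi_j))\omega(\Xi(j);\cdot))(Z)+\sum_{m<n}(-1)^{m+n}\omega([\xi_m,\xi_n],\Xi(m,n);Z)$, $(\rho^{(r)}(y)\beta)(x_1,\dots,x_r)=\rho_0^1(y)\beta(x_1,\dots,x_r)-\sum_k\beta(x_1,\dots,\mathcal L_yx_k,\dots,x_r)$ ($r\ge1$),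 $\rho^{(0)}=\rho_0^0$. $\partial\omega(\Xi;Z)=\sum_{k=0}^{p+1}(-1)^k\omega(\partial_k\Xi;Z)$. $\delta_{(1)}:C^{p,q}_r\to C^{p,q}_{r+1}$: for $r=0$, $\delta_{(1)}\omega(\Xi;x)=\rho_1(x)\omega(\Xi)$; for $r\ge1$, $\delta_{(1)}\omega(\Xi;z_0,\dots,z_r)=\sum_k(-1)^k\rho_0^1(\mu(z_k))\omega(\Xi;Z(k))+\sum_{a<b}(-1)^{a+b}\omega(\Xi;[z_a,z_b],Z(a,b))$. $\Delta:C^{p,q}_r\to C^{p+1,q+1}_{r-1}$ ($r\ge1$): for $\Xi=(\xi_0,\dots,\xi_q)\in\mathfrak g_{p+1}^{q+1}$, $\xi_j=(x_j^0,\dots,x_j^p;y_j)$, $\Delta\omega(\Xi;Z)=\sum_j(-1)^j\omega(\partial_0\Xi(j);x_j^0,Z)$, composed with $\phi$ when $r=1$. *)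

From mathcomp Require Import all_boot all_algebra.
Set Implicit Arguments. Unset Strict Implicit. Unset Printing Implicit Defensive.
Import GRing.Theory.
Local Open Scope ring_scope.

Definition is_lin (K : fieldType) (U X : lmodType K) (f : U -> X) : Prop :=
  forall (a : K) (u v : U), f (a *: u + v) = a *: f u + f v.

Definition is_bilin (K : fieldType) (U1 U2 X : lmodType K)
  (b : U1 -> U2 -> X) : Prop :=
  (forall u, is_lin (b u)) /\ (forall v, is_lin (fun u => b u v)).

Definition lie_algebra (K : fieldType) (G : lmodType K) (bg : G -> G -> G) : Prop :=
  [/\ is_bilin bg,
      (forall x, bg x x = 0) &
      (forall x y z, bg x (bg y z) + bg y (bg z x) + bg z (bg x y) = 0)].

Definition crossed_module (K : fieldType) (G H : lmodType K)
  (bg : G -> G -> G) (bh : H -> H -> H) (mu : G -> H) (L : H -> G -> G) : Prop :=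
  [/\ lie_algebra bg /\ lie_algebra bh,
      (is_lin mu /\ (forall x0 x1, mu (bg x0 x1) = bh (mu x0) (mu x1))),
      [/\ is_bilin L,
          (forall y x0 x1, L y (bg x0 x1) = bg (L y x0) x1 + bg x0 (L y x1)) &
          (forall y0 y1 x, L (bh y0 y1) x = L y0 (L y1 x) - L y1 (L y0 x))],
      (forall y x, mu (L y x) = bh y (mu x)) &
      (forall x0 x1, L (mu x0) x1 = bg x0 x1)].

Definition lie_rep (K : fieldType) (H U : lmodType K) (bh : H -> H -> H)
  (rho : H -> U -> U) : Prop :=
  is_bilin rho /\
  (forall y0 y1 u, rho (bh y0 y1) u = rho y0 (rho y1 u) - rho y1 (rho y0 u)).

Definition two_rep (K : fieldType) (G H W V : lmodType K)
  (bg : G -> G -> G) (bh : H -> H -> H) (mu : G -> H) (L : H -> G -> G)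
  (phi : W -> V) (rho01 : H -> W -> W) (rho00 : H -> V -> V)
  (rho1 : G -> V -> W) : Prop :=
  [/\ is_lin phi /\ lie_rep bh rho01 /\ lie_rep bh rho00 /\ is_bilin rho1,
      (forall y w, phi (rho01 y w) = rho00 y (phi w)),
      (forall x0 x1 v, rho1 (bg x0 x1) v
                       = rho1 x0 (phi (rho1 x1 v)) - rho1 x1 (phi (rho1 x0 v))),
      (forall x v, rho00 (mu x) v = phi (rho1 x v)) /\
      (forall x w, rho01 (mu x) w = rho1 x (phi w)) &
      (forall y x v, rho1 (L y x) v = rho01 y (rho1 x v) - rho1 x (rho00 y v))].

(* element (x^0,...,x^{p-1}; y) is the pair ([ffun j => x^j], y)     *)

Definition Gp (K : fieldType) (G H : lmodType K) (p : nat) : lmodType K :=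
  ({ffun 'I_p -> G} * H)%type.

(* entry n of x (0 if out of range) *)
Definition xat (K : fieldType) (G : lmodType K) (p : nat)
  (x : {ffun 'I_p -> G}) (n : nat) : G :=
  if @insub nat (fun k => k < p)%N _ n is Some i then x i else 0.

Section Simplicial.
Variables (K : fieldType) (G H : lmodType K).
Variables (bg : G -> G -> G) (bh : H -> H -> H) (mu : G -> H) (L : H -> G -> G).

Definition hat_t (p : nat) (xi : Gp G H p) : H :=
  xi.2 + \sum_(j < p) mu (xi.1 j).

(* y-component of the j-th entry a_j of the composable string *)
Definition str_h (p : nat) (xi : Gp G H p) (j : 'I_p) : H :=
  xi.2 + \sum_(k < p | (j < k)%N) mu (xi.1 k).

(* Bracket of g_p, transported from the componentwise bracket on composable
   strings (a_0,...,a_{p-1}) in (g x|_L h)^p, a_j = (x^j, y + sum_{k>j} mu x^k) *)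
Definition brp (p : nat) (xi xi' : Gp G H p) : Gp G H p :=
  ([ffun j => bg (xi.1 j) (xi'.1 j) + L (str_h xi j) (xi'.1 j)
                - L (str_h xi' j) (xi.1 j)],
   bh xi.2 xi'.2).

Definition face (p k : nat) (xi : Gp G H p.+1) : Gp G H p :=
  let x := xat xi.1 in
  if k == 0%N then ([ffun i : 'I_p => x i.+1], xi.2)
  else if (k <= p)%N then
    ([ffun i : 'I_p => if (i < k.-1)%N then x i
                       else if i == k.-1 :> nat then x k.-1 + x k
                       else x i.+1], xi.2)
  else ([ffun i : 'I_p => x i], xi.2 + mu (x p)).
End Simplicial.

(* Finite argument lists are represented as functions nat -> T; only *)
(* the first q (resp. r) entries are meaningful.                     *)

Definition upd (T : Type) (Z : nat -> T) (k : nat) (v : T) : nat -> T :=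
  fun i => if i == k then v else Z i.
Definition pcons (T : Type) (v : T) (Z : nat -> T) : nat -> T :=
  fun i => if i is i'.+1 then Z i' else v.
Definition rem1 (T : Type) (Z : nat -> T) (j : nat) : nat -> T :=
  fun i => Z (bump j i).
(* Z(m,n), m < n: remove entries m and n *)
Definition rem2 (T : Type) (Z : nat -> T) (m n : nat) : nat -> T :=
  fun i => Z (bump n (bump m i)).

(* C^{p,q}_r with values in A (A = W for r >= 1, A = V for r = 0):
   elements of  wedge^q g_p^* (x) wedge^r g^* (x) A, i.e. maps that are
   multilinear and alternating in the q arguments of g_p and in the
   r arguments of g (and only depend on those arguments). *)
Definition cochain (K : fieldType) (G H A : lmodType K) (p : nat) : Type :=
  (nat -> Gp G H p) -> (nat -> G) -> A.

Definition is_cochain (K : fieldType) (G H A : lmodType K) (p q r : nat)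
  (w : cochain G H A p) : Prop :=
  [/\ (forall Xi Xi' Z Z', (forall i, (i < q)%N -> Xi i = Xi' i) ->
          (forall i, (i < r)%N -> Z i = Z' i) -> w Xi Z = w Xi' Z'),
      (forall Xi Z i, (i < q)%N -> is_lin (fun u => w (upd Xi i u) Z)),
      (forall Xi Z i, (i < r)%N -> is_lin (fun x => w Xi (upd Z i x))),
      (forall Xi Z i j, (i < j < q)%N -> Xi i = Xi j -> w Xi Z = 0) &
      (forall Xi Z i j, (i < j < r)%N -> Z i = Z j -> w Xi Z = 0)].

Section Operators.
Variables (K : fieldType) (G H W V : lmodType K).
Variables (bg : G -> G -> G) (bh : H -> H -> H) (mu : G -> H) (L : H -> G -> G).
Variables (phi : W -> V) (rho01 : H -> W -> W) (rho00 : H -> V -> V)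
          (rho1 : G -> V -> W).

Definition sgn (n : nat) : K := (-1) ^+ n.

Definition rho_r (r : nat) (y : H) (beta : (nat -> G) -> W) : (nat -> G) -> W :=
  fun Z => rho01 y (beta Z) - \sum_(k < r) beta (upd Z k (L y (Z k))).

Definition delta_r (p q r : nat) (w : cochain G H W p) : cochain G H W p :=
  fun Xi Z =>
    \sum_(j < q.+1) sgn j *:
        rho_r r (hat_t mu (Xi j)) (w (rem1 Xi j)) Z
  + \sum_(m < q.+1) \sum_(n < q.+1 | (m < n)%N)
        sgn (m + n) *: w (pcons (brp bg bh mu L (Xi m) (Xi n)) (rem2 Xi m n)) Z.

Definition pdiff (A : lmodType K) (p : nat) (w : cochain G H A p)
  : cochain G H A p.+1 :=
  fun Xi Z => \sum_(k < p.+2) sgn k *: w (fun i => face mu k (Xi i)) Z.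

Definition d1_0 (p : nat) (w : cochain G H V p) : cochain G H W p :=
  fun Xi Z => rho1 (Z 0%N) (w Xi (fun _ => 0)).

Definition d1 (p r : nat) (w : cochain G H W p) : cochain G H W p :=
  fun Xi Z =>
    \sum_(k < r.+1) sgn k *: rho01 (mu (Z k)) (w Xi (rem1 Z k))
  + \sum_(a < r.+1) \sum_(b < r.+1 | (a < b)%N)
        sgn (a + b) *: w Xi (pcons (bg (Z a) (Z b)) (rem2 Z a b)).

Definition x0 (p : nat) (xi : Gp G H p.+1) : G := xi.1 ord0.

Definition Delta (p q : nat) (w : cochain G H W p) : cochain G H W p.+1 :=
  fun Xi Z => \sum_(j < q.+1) sgn j *:
      w (fun i => face mu 0 (rem1 Xi j i)) (pcons (x0 (Xi j)) Z).

(* Delta : C^{p,q}_1 -> C^{p+1,q+1}_0, composed with phi *)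
Definition Delta_1 (p q : nat) (w : cochain G H W p) : cochain G H V p.+1 :=
  fun Xi Z => \sum_(j < q.+1) sgn j *:
      phi (w (fun i => face mu 0 (rem1 Xi j i)) (pcons (x0 (Xi j)) Z)).
End Operators.

From mathcomp Require Import all_boot all_algebra zify.
Import GRing.Theory.
Local Open Scope ring_scope.
Set Implicit Arguments. Unset Strict Implicit. Unset Printing Implicit Defensive.

(* Split delta^(r) into its action part (the terms rho^(r)(hat_t xi_j)) and its
   bracket part.  The face maps are Lie algebra morphisms g_(p+1) -> g_p, so the
   simplicial differential commutes with the bracket part; moreover
   hat_t (face k xi) = hat_t xi for k > 0 while hat_t (face 0 xi) = hat_t xi - mu x^0.
   Hence delta^(r) partial - partial delta^(r) is
   sum_j (-1)^j rho^(r)(mu x_j^0) omega(face_0 Xi(j)).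
   On the other side, Delta is an alternating sum of the contractions
   iota_(x_j^0) = [contract (x0 (Xi j))] precomposed with face_0, and delta_(1)
   obeys the Cartan formula iota_x delta_(1) + delta_(1) iota_x = rho^(r)(mu x);
   for r = 1 the second term is rho_1(z) phi iota_x, because
   rho_0^1(mu z) = rho_1(z) phi.  Summing the Cartan formula over j gives the
   same expression. *)

Section Linear.
Variables (K : fieldType) (U X : lmodType K) (f : U -> X).
Hypothesis f_lin : is_lin f.

Lemma lin0 : f 0 = 0.
Proof.
have e := f_lin 1 0 0; rewrite !scale1r addr0 in e.
by apply: (@addrI _ (f 0)); rewrite addr0 -e.
Qed.
Lemma linD u v : f (u + v) = f u + f v.
Proof. by rewrite -[u in LHS]scale1r f_lin scale1r. Qed.
Lemma linZ a u : f (a *: u) = a *: f u.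
Proof. by rewrite -[_ *: u]addr0 f_lin lin0 addr0. Qed.
Lemma linN u : f (- u) = - f u.
Proof. by rewrite -scaleN1r linZ scaleN1r. Qed.
Lemma linB u v : f (u - v) = f u - f v.
Proof. by rewrite linD linN. Qed.
Lemma lin_sum I (s : seq I) (P : pred I) (F : I -> U) :
  f (\sum_(i <- s | P i) F i) = \sum_(i <- s | P i) f (F i).
Proof. exact: (big_morph f linD lin0). Qed.
End Linear.

Section Bilinear.
Variables (K : fieldType) (U1 U2 X : lmodType K) (b : U1 -> U2 -> X).
Hypothesis b_bilin : is_bilin b.
Lemma blDl u u' v : b (u + u') v = b u v + b u' v. Proof. exact: (linD (b_bilin.2 v) u u'). Qed.
Lemma blDr u v v' : b u (v + v') = b u v + b u v'. Proof. exact: (linD (b_bilin.1 u) v v'). Qed.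
Lemma blBl u u' v : b (u - u') v = b u v - b u' v. Proof. exact: (linB (b_bilin.2 v) u u'). Qed.
Lemma blZr u a v : b u (a *: v) = a *: b u v. Proof. exact: (linZ (b_bilin.1 u) a v). Qed.
Lemma bl_sumr u I (s : seq I) (P : pred I) (F : I -> U2) :
  b u (\sum_(i <- s | P i) F i) = \sum_(i <- s | P i) b u (F i).
Proof. exact: (lin_sum (b_bilin.1 u)). Qed.
End Bilinear.

Lemma lie_anticomm (K : fieldType) (G : lmodType K) (bg : G -> G -> G) :
  lie_algebra bg -> forall x y, bg x y = - bg y x.
Proof.
case=> bg_bilin bgxx _ x y; apply/eqP; rewrite -addr_eq0.
by rewrite -(bgxx (x + y)) (blDl bg_bilin) !(blDr bg_bilin) !bgxx add0r addr0.
Qed.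

Lemma sgnS (K : fieldType) n : sgn K n.+1 = - sgn K n.
Proof. by rewrite /sgn exprS mulN1r. Qed.

Lemma scaler_sum_exchange (K : fieldType) (V : lmodType K) I J (s : seq I) (t : seq J)
    (P : pred I) (Q : pred J) (a : I -> K) (b : J -> K) (F : I -> J -> V) :
  \sum_(i <- s | P i) a i *: \sum_(j <- t | Q j) b j *: F i j
  = \sum_(j <- t | Q j) b j *: \sum_(i <- s | P i) a i *: F i j.
Proof.
under eq_bigr do rewrite scaler_sumr; rewrite exchange_big.
by apply: eq_bigr => j _; rewrite scaler_sumr; apply: eq_bigr => i _; rewrite !scalerA mulrC.
Qed.

Lemma xatE (K : fieldType) (G : lmodType K) p (x : {ffun 'I_p -> G}) (i : 'I_p) :
  xat x i = x i.
Proof. by rewrite /xat insubT // => lt_ip; congr (x _); apply: val_inj. Qed.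

Lemma x0E (K : fieldType) (G H : lmodType K) p (xi : Gp G H p.+1) : x0 xi = xat xi.1 0.
Proof. by rewrite /x0 -xatE. Qed.

Section Faces.
Variables (K : fieldType) (G H : lmodType K) (mu : G -> H).
Hypothesis mu_lin : is_lin mu.

Definition tail p (xi : Gp G H p) (i : nat) : H :=
  xi.2 + \sum_(i <= n < p) mu (xat xi.1 n).

Lemma hat_t_tail p (xi : Gp G H p) : hat_t mu xi = tail xi 0.
Proof.
by rewrite /hat_t /tail big_mkord; congr (_ + _); apply: eq_bigr => i _; rewrite xatE.
Qed.

Lemma str_h_tail p (xi : Gp G H p) (j : 'I_p) : str_h mu xi j = tail xi j.+1.
Proof.
rewrite /str_h /tail big_geq_mkord; congr (_ + _).
by apply: eq_bigr => i _; rewrite xatE.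
Qed.

Lemma tailS p (xi : Gp G H p) i : (i < p)%N -> tail xi i = tail xi i.+1 + mu (xat xi.1 i).
Proof. by move=> lt_ip; rewrite /tail big_ltn // addrAC addrA. Qed.

Lemma tail_ge p (xi : Gp G H p) i : (p <= i)%N -> tail xi i = xi.2.
Proof. by move=> le_pi; rewrite /tail big_geq ?addr0. Qed.

Section FaceEntries.
Variables (p k : nat) (xi : Gp G H p.+1).

Lemma face_xat n : (n < p)%N ->
  xat (face mu k xi).1 n =
  if k == 0%N then xat xi.1 n.+1
  else if (k <= p)%N then
    if (n < k.-1)%N then xat xi.1 n
    else if n == k.-1 then xat xi.1 k.-1 + xat xi.1 k
    else xat xi.1 n.+1
  else xat xi.1 n.
Proof.
move=> lt_np; rewrite -[n]/(nat_of_ord (Ordinal lt_np)) xatE /face.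
by case: (k == 0%N); [|case: (k <= p)%N]; rewrite /= ffunE.
Qed.

Lemma face_xat_lt n : (n.+1 < k <= p.+1)%N -> xat (face mu k xi).1 n = xat xi.1 n.
Proof.
move=> kn; rewrite face_xat; last by lia.
rewrite ifN; last by lia.
by case: ifP => // _; rewrite ifT //; lia.
Qed.

Lemma face_xat_merge : (0 < k <= p)%N ->
  xat (face mu k xi).1 k.-1 = xat xi.1 k.-1 + xat xi.1 k.
Proof.
move=> k_range; rewrite face_xat; last by lia.
rewrite ifN; last by lia.
by rewrite ifT ?ltnn ?eqxx //; lia.
Qed.

Lemma face_xat_ge n : (k <= n < p)%N -> xat (face mu k xi).1 n = xat xi.1 n.+1.
Proof.
move=> kn; rewrite face_xat; last by lia.
by case: ifP => // /negbT k0; rewrite ifT ?ifF ?ifF //; lia.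
Qed.

Lemma face_snd : (face mu k xi).2 = if (k <= p)%N then xi.2 else xi.2 + mu (xat xi.1 p).
Proof. by rewrite /face; case: k => [|k'] //=; case: ifP. Qed.

End FaceEntries.

Lemma tail_face p k (xi : Gp G H p.+1) i : (k <= p.+1)%N -> (i <= p)%N ->
  tail (face mu k xi) i = tail xi (i + (k <= i)).
Proof.
move=> le_kp; have [d] := ubnP (p - i); elim: d i => // d IH i lt_pi_d le_ip.
case: (ltngtP i p) le_ip => // [lt_ip _ | -> _].
  rewrite (tailS _ lt_ip) IH //; last by lia.
  case: (ltngtP k i.+1) => [lt_ki | lt_ik | ->].
  - have -> : (k <= i)%N by lia.
    by rewrite face_xat_ge ?addn1 -?tailS //; lia.
  - have -> : (k <= i)%N = false by lia.
    by rewrite face_xat_lt ?addn0 -?tailS //; lia.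
  - rewrite face_xat_merge /= ?ltnn ?addn1 ?addn0 ?(linD mu_lin) ?addrA; last by lia.
    by rewrite addrAC -!tailS //; lia.
rewrite tail_ge // face_snd.
case: ifP => [le_kp' | /negbT gt_kp]; first by rewrite addn1 tail_ge.
by rewrite addn0 tailS ?tail_ge.
Qed.

Lemma hat_t_face0 p (xi : Gp G H p.+1) :
  hat_t mu (face mu 0 xi) = hat_t mu xi - mu (x0 xi).
Proof. by rewrite !hat_t_tail tail_face // (tailS xi (ltn0Sn p)) x0E addrK. Qed.

Lemma hat_t_face p k (xi : Gp G H p.+1) : (0 < k <= p.+1)%N ->
  hat_t mu (face mu k xi) = hat_t mu xi.
Proof. by case/andP=> k_gt0 le_kp; rewrite !hat_t_tail tail_face // leqNgt k_gt0. Qed.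
End Faces.

Section FaceBracket.
Variables (K : fieldType) (G H : lmodType K).
Variables (bg : G -> G -> G) (bh : H -> H -> H) (mu : G -> H) (L : H -> G -> G).
Hypothesis cm : crossed_module bg bh mu L.

Let bg_bilin : is_bilin bg. Proof. by case: cm => [[[]]]. Qed.
Let bh_bilin : is_bilin bh. Proof. by case: cm => [[_ []]]. Qed.
Let L_bilin : is_bilin L. Proof. by case: cm => _ _ []. Qed.
Let bg_anti : forall x x', bg x x' = - bg x' x. Proof. by case: cm => [[/lie_anticomm]]. Qed.
Let bh_anti : forall y y', bh y y' = - bh y' y. Proof. by case: cm => [[_ /lie_anticomm]]. Qed.
Let mu_lin : is_lin mu. Proof. by case: cm => _ []. Qed.
Let mu_bg : forall x x', mu (bg x x') = bh (mu x) (mu x'). Proof. by case: cm => _ []. Qed.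
Let mu_L : forall y x, mu (L y x) = bh y (mu x). Proof. by case: cm. Qed.
Let L_mu : forall x x', L (mu x) x' = bg x x'. Proof. by case: cm. Qed.

(* The g-component of the bracket [(x, s), (x', s')] in the semidirect product g x|_L h. *)
Definition sd_br (x : G) (s : H) (x' : G) (s' : H) : G := bg x x' + L s x' - L s' x.

Lemma sd_br_merge x1 x2 s x1' x2' s' :
  sd_br (x1 + x2) s (x1' + x2') s'
  = sd_br x1 (s + mu x2) x1' (s' + mu x2') + sd_br x2 s x2' s'.
Proof.
rewrite /sd_br !(blDl bg_bilin) !(blDr bg_bilin) !(blDl L_bilin) !(blDr L_bilin) !L_mu.
rewrite [bg x2' x1]bg_anti opprB opprD !addrA.
by rewrite [LHS](ACl (1*5*3*2*7*4*6*8)).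
Qed.

Lemma bh_mu_sd_br x s x' s' :
  bh (s + mu x) (s' + mu x') = bh s s' + mu (sd_br x s x' s').
Proof.
rewrite /sd_br (linB mu_lin) (linD mu_lin) mu_bg !mu_L (blDl bh_bilin) !(blDr bh_bilin).
rewrite [bh (mu x) s']bh_anti !addrA.
by rewrite [LHS](ACl (1*4*2*3)).
Qed.

Lemma brp_xat p (xi xi' : Gp G H p) n : (n < p)%N ->
  xat (brp bg bh mu L xi xi').1 n
  = sd_br (xat xi.1 n) (tail mu xi n.+1) (xat xi'.1 n) (tail mu xi' n.+1).
Proof.
move=> lt_np; rewrite -[n]/(nat_of_ord (Ordinal lt_np)) !xatE ffunE.
by rewrite !str_h_tail.
Qed.

Lemma face_brp p k (xi xi' : Gp G H p.+1) : (k <= p.+1)%N ->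
  face mu k (brp bg bh mu L xi xi') = brp bg bh mu L (face mu k xi) (face mu k xi').
Proof.
move=> le_kp.
apply: injective_projections; last first.
  rewrite /= !face_snd /=; case: ifP => // _.
  by rewrite brp_xat // !tail_ge // bh_mu_sd_br.
apply/ffunP => i; have lt_ip := ltn_ord i.
rewrite -[LHS]xatE -[RHS]xatE brp_xat // !tail_face //; try lia.
case: (ltngtP k i.+1) => [lt_ki | lt_ik | eq_ki].
- by rewrite !face_xat_ge ?brp_xat ?addn1 //; lia.
- by rewrite !face_xat_lt ?brp_xat ?addn0 //; lia.
subst k; rewrite !face_xat_merge ?brp_xat ?addn1 //= sd_br_merge -!tailS //.
Qed.
End FaceBracket.

Section Updates.
Variables (T : Type) (Z : nat -> T).

Lemma updC i j a b : i != j -> upd (upd Z i a) j b =1 upd (upd Z j b) i a.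
Proof.
by move=> ne_ij k; rewrite /upd; case: (eqVneq k j) => // ->; rewrite eq_sym (negbTE ne_ij).
Qed.

Lemma pcons_rem1_0 v : pcons v (rem1 Z 0) =1 upd Z 0 v.
Proof. by case. Qed.

Lemma rem1_upd_succ b : rem1 (upd Z b.+1 (Z b)) b =1 rem1 Z b.+1.
Proof. by move=> j; rewrite /rem1 /upd; case: eqP => e; congr Z; move: e; rewrite /bump; lia. Qed.
End Updates.

Section AlternatingForms.
Variables (K : fieldType) (G A : lmodType K) (r : nat).

Definition alt_form (beta : (nat -> G) -> A) : Prop :=
  [/\ forall Z Z', (forall i, (i < r)%N -> Z i = Z' i) -> beta Z = beta Z',
      forall Z i, (i < r)%N -> is_lin (fun x => beta (upd Z i x)) &
      forall Z i j, (i < j < r)%N -> Z i = Z j -> beta Z = 0].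

Variables (beta : (nat -> G) -> A).
Hypothesis beta_alt : alt_form beta.

Lemma alt_form_ext Z Z' : (forall i, (i < r)%N -> Z i = Z' i) -> beta Z = beta Z'.
Proof. by case: beta_alt => ext _ _; apply: ext. Qed.

Lemma alt_form_lin Z i : (i < r)%N -> is_lin (fun x => beta (upd Z i x)).
Proof. by case: beta_alt => _ lin _; apply: lin. Qed.

Lemma alt_form_swap Z i a b : (i.+1 < r)%N ->
  beta (upd (upd Z i a) i.+1 b) = - beta (upd (upd Z i b) i.+1 a).
Proof.
move=> lt_ir; pose F u v := beta (upd (upd Z i u) i.+1 v).
have F_diag u : F u u = 0.
  case: beta_alt => _ _ alt; apply: (alt _ i i.+1); first by rewrite ltnSn.
  by rewrite /upd eqxx (ltn_eqF (ltnSn i)) eqxx.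
have F_addr u v v' : F u (v + v') = F u v + F u v' by exact: (linD (alt_form_lin _ lt_ir)).
have F_addl u u' v : F (u + u') v = F u v + F u' v.
  have F_upd_comm u1 v1 : F u1 v1 = beta (upd (upd Z i.+1 v1) i u1).
    apply: alt_form_ext => j _; rewrite /upd.
    by case: (eqVneq j i.+1) => [->|//]; rewrite (gtn_eqF (ltnSn i)).
  by rewrite !F_upd_comm (linD (alt_form_lin _ (ltnW lt_ir))).
apply/eqP; rewrite -addr_eq0; apply/eqP.
by rewrite -(F_diag (a + b)) F_addl !F_addr !F_diag add0r addr0.
Qed.

Lemma alt_form_eq Z Z' : Z =1 Z' -> beta Z = beta Z'.
Proof. by move=> eZ; apply: alt_form_ext => i _. Qed.

Lemma alt_form_swap01 a b R : (1 < r)%N ->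
  beta (pcons a (pcons b R)) = - beta (pcons b (pcons a R)).
Proof.
move=> lt_1r; have E u v : beta (pcons u (pcons v R))
    = beta (upd (upd (pcons 0 (pcons 0 R)) 0 u) 1 v).
  by apply: alt_form_eq => -[|[|j]].
by rewrite !E alt_form_swap.
Qed.

Lemma alt_form_shift Z b v : (b < r)%N ->
  beta (pcons v (rem1 Z b)) = sgn K b *: beta (upd Z b v).
Proof.
elim: b Z => [|b IH] Z lt_br; first by rewrite scale1r; apply: alt_form_eq; apply: pcons_rem1_0.
rewrite (@alt_form_eq _ (pcons v (rem1 (upd Z b.+1 (Z b)) b))); last first.
  by case=> //= j; rewrite rem1_upd_succ.
rewrite IH ?(ltnW lt_br) // sgnS scaleNr -scalerN; congr (_ *: _).
rewrite (alt_form_eq (updC _ _ _ (negbT (gtn_eqF (ltnSn b))))) alt_form_swap //.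
by congr (- _); apply: alt_form_eq => j; rewrite /upd; case: eqP => // _; case: eqP => [->|].
Qed.
End AlternatingForms.

Section Cochains.
Variables (K : fieldType) (G H A : lmodType K) (p q r : nat) (w : cochain G H A p).
Hypothesis w_cochain : is_cochain q r w.

Lemma cochain_alt_form Xi : alt_form r (w Xi).
Proof.
case: w_cochain => ext _ lin _ alt; split; [|exact: lin|exact: alt].
by move=> Z Z' eZ; apply: ext.
Qed.

Lemma cochain_eq Xi Xi' Z : Xi =1 Xi' -> w Xi Z = w Xi' Z.
Proof. by case: w_cochain => ext _ _ _ _ eXi; apply: ext. Qed.
End Cochains.

Section ActionOperator.
Variables (K : fieldType) (G H W : lmodType K) (L : H -> G -> G) (rho01 : H -> W -> W).
Hypotheses (L_bilin : is_bilin L) (rho01_bilin : is_bilin rho01).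
Variable r : nat.

Lemma rho_r_sum y I (s : seq I) (P : pred I) (c : I -> K) (B : I -> (nat -> G) -> W) Z :
  rho_r L rho01 r y (fun Z => \sum_(i <- s | P i) c i *: B i Z) Z
  = \sum_(i <- s | P i) c i *: rho_r L rho01 r y (B i) Z.
Proof.
rewrite /rho_r (bl_sumr rho01_bilin) exchange_big -sumrB; apply: eq_bigr => i _.
by rewrite (blZr rho01_bilin) scalerBr scaler_sumr.
Qed.

Lemma rho_rB y y' beta Z : alt_form r beta ->
  rho_r L rho01 r y beta Z - rho_r L rho01 r y' beta Z = rho_r L rho01 r (y - y') beta Z.
Proof.
move=> beta_alt; rewrite /rho_r (blBl rho01_bilin).
under [in RHS]eq_bigr => k _ do rewrite (blBl L_bilin) (linB (alt_form_lin beta_alt _ (ltn_ord k))).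
by rewrite sumrB !opprB !addrA [LHS](ACl (1*4*3*2)).
Qed.
End ActionOperator.

Section DeltaPartial.
Variables (K : fieldType) (G H W : lmodType K).
Variables (bg : G -> G -> G) (bh : H -> H -> H) (mu : G -> H) (L : H -> G -> G).
Variable rho01 : H -> W -> W.
Hypotheses (cm : crossed_module bg bh mu L) (rho01_bilin : is_bilin rho01).

Let mu_lin : is_lin mu. Proof. by case: cm => _ []. Qed.
Let L_bilin : is_bilin L. Proof. by case: cm => _ _ []. Qed.

Definition delta_act p q r (w : cochain G H W p) : cochain G H W p :=
  fun Xi Z => \sum_(j < q.+1) sgn K j *: rho_r L rho01 r (hat_t mu (Xi j)) (w (rem1 Xi j)) Z.

Definition delta_brk p q (w : cochain G H W p) : cochain G H W p :=
  fun Xi Z => \sum_(m < q.+1) \sum_(n < q.+1 | (m < n)%N)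
    sgn K (m + n) *: w (pcons (brp bg bh mu L (Xi m) (Xi n)) (rem2 Xi m n)) Z.

Variables (p q r : nat) (w : cochain G H W p).
Hypothesis w_cochain : is_cochain q r w.

Lemma pdiff_delta_brk Xi Z :
  pdiff mu (delta_brk q w) Xi Z = delta_brk q (pdiff mu w) Xi Z.
Proof.
rewrite /pdiff /delta_brk; under eq_bigr do rewrite scaler_sumr.
rewrite exchange_big; apply: eq_big => // m _; rewrite scaler_sum_exchange.
apply: eq_big => // n _; congr (_ *: _); apply: eq_big => // k _; congr (_ *: _).
apply: (cochain_eq w_cochain) => -[|i] //=.
by rewrite face_brp // -ltnS.
Qed.

Lemma pdiff_delta_act Xi Z :
  delta_act q r (pdiff mu w) Xi Z - pdiff mu (delta_act q r w) Xi Z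
  = \sum_(j < q.+1) sgn K j *:
      rho_r L rho01 r (mu (x0 (Xi j))) (w (fun i => face mu 0 (rem1 Xi j i))) Z.
Proof.
rewrite /delta_act /pdiff; under eq_bigr do rewrite (rho_r_sum _ rho01_bilin).
rewrite [X in _ - X]scaler_sum_exchange -sumrB; apply: eq_big => // j _.
rewrite -scalerBr -sumrB.
congr (_ *: _); rewrite big_ord_recl big1 ?addr0 => [|k _].
  rewrite -scalerBr /= scale1r (rho_rB L_bilin rho01_bilin) ?hat_t_face0 ?subKr //.
  exact: (cochain_alt_form w_cochain).
by rewrite hat_t_face ?subrr ?scaler0 // lift0 ltnS /=.
Qed.

Lemma delta_pdiff Xi Z :
  delta_r bg bh mu L rho01 q r (pdiff mu w) Xi Z - pdiff mu (delta_r bg bh mu L rho01 q r w) Xi Z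
  = \sum_(j < q.+1) sgn K j *:
      rho_r L rho01 r (mu (x0 (Xi j))) (w (fun i => face mu 0 (rem1 Xi j i))) Z.
Proof.
have -> : pdiff mu (delta_r bg bh mu L rho01 q r w) Xi Z
    = pdiff mu (delta_act q r w) Xi Z + pdiff mu (delta_brk q w) Xi Z.
  by rewrite /pdiff -big_split; apply: eq_big => // k _; exact: scalerDr.
rewrite pdiff_delta_brk -pdiff_delta_act.
by rewrite opprD addrACA subrr addr0.
Qed.
End DeltaPartial.

Definition contract (K : fieldType) (G H A : lmodType K) p (x : G) (w : cochain G H A p)
  : cochain G H A p :=
  fun Xi Z => w Xi (pcons x Z).

Section Cartan.
Variables (K : fieldType) (G H W : lmodType K).
Variables (bg : G -> G -> G) (mu : G -> H) (L : H -> G -> G) (rho01 : H -> W -> W).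
Hypothesis L_mu : forall x x', L (mu x) x' = bg x x'.
Variables (p r : nat) (w : cochain G H W p) (Xi : nat -> Gp G H p).
Hypothesis w_alt : alt_form r.+1 (w Xi).

Lemma d1_pcons x Z :
  d1 bg mu rho01 r.+1 w Xi (pcons x Z)
  = rho_r L rho01 r.+1 (mu x) (w Xi) Z - d1 bg mu rho01 r (contract x w) Xi Z.
Proof.
have action_terms : \sum_(k < r.+2) sgn K k *: rho01 (mu (pcons x Z k)) (w Xi (rem1 (pcons x Z) k))
    = rho01 (mu x) (w Xi Z)
      - \sum_(k < r.+1) sgn K k *: rho01 (mu (Z k)) (w Xi (pcons x (rem1 Z k))).
  rewrite big_ord_recl scale1r -sumrN; congr (_ + _).
  apply: eq_bigr => k _; rewrite lift0 sgnS scaleNr; congr (- (_ *: _)).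
  by congr (rho01 _); apply: (alt_form_eq w_alt) => -[|i]; rewrite /rem1 /= ?bumpS.
have bracket_terms : \sum_(a < r.+2) \sum_(b < r.+2 | (a < b)%N) sgn K (a + b) *:
      w Xi (pcons (bg (pcons x Z a) (pcons x Z b)) (rem2 (pcons x Z) a b))
    = - \sum_(k < r.+1) w Xi (upd Z k (L (mu x) (Z k)))
      - \sum_(a < r.+1) \sum_(b < r.+1 | (a < b)%N) sgn K (a + b) *:
          w Xi (pcons x (pcons (bg (Z a) (Z b)) (rem2 Z a b))).
  rewrite big_ord_recl -!sumrN; apply: congr2.
    (* the terms [x, z_b] are the L_(mu x) z_b terms of rho^(r)(mu x) *)
    rewrite big_mkcond big_ord_recl /= add0r; apply: eq_bigr => b _.
    rewrite !add0n (_ : bump 0 b = b.+1) // sgnS scaleNr -L_mu; congr (- _).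
    rewrite (@alt_form_eq _ _ _ _ _ w_alt _ (pcons (L (mu x) (Z b)) (rem1 Z b))).
      by rewrite (alt_form_shift w_alt) // signrZK.
    by case=> //= i; rewrite /rem2 /rem1 bumpS.
  apply: eq_big => // a _.
  rewrite -sumrN big_mkcond [RHS]big_mkcond big_ord_recl ltn0 Monoid.simpm.
  apply: eq_big => // b _; rewrite !lift0 ltnS; case: ifP => // lt_ab.
  rewrite addSn addnS !sgnS opprK -scalerN -(alt_form_swap01 w_alt); last by have := ltn_ord b; lia.
  by congr (_ *: _); apply: (alt_form_eq w_alt) => -[|[|i]] //=; rewrite /rem2 !bumpS.
rewrite /d1 action_terms bracket_terms /rho_r opprD !addrA.
by rewrite [LHS](ACl (1*3*2*4)).
Qed.
End Cartan.

Section DeltaContraction.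
Variables (K : fieldType) (G H W : lmodType K).
Variables (bg : G -> G -> G) (mu : G -> H) (L : H -> G -> G) (rho01 : H -> W -> W).
Hypotheses (L_mu : forall x x', L (mu x) x' = bg x x') (rho01_bilin : is_bilin rho01).

Lemma d1_sum p r n (c : 'I_n -> K) (F : 'I_n -> cochain G H W p) Xi Z :
  d1 bg mu rho01 r (fun Xi Z => \sum_(j < n) c j *: F j Xi Z) Xi Z
  = \sum_(j < n) c j *: d1 bg mu rho01 r (F j) Xi Z.
Proof.
rewrite /d1; under [RHS]eq_bigr do rewrite scalerDr; rewrite big_split /=; congr (_ + _).
  rewrite -scaler_sum_exchange; apply: eq_bigr => k _.
  rewrite (bl_sumr rho01_bilin); congr (_ *: _).
  by apply: eq_bigr => j _; rewrite (blZr rho01_bilin).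
under [RHS]eq_bigr do rewrite scaler_sumr; rewrite exchange_big; apply: eq_bigr => a _.
exact: scaler_sum_exchange.
Qed.

Variables (p q r : nat) (w : cochain G H W p).

Lemma d1_Delta Xi Z :
  d1 bg mu rho01 r (Delta mu q w) Xi Z
  = \sum_(j < q.+1) sgn K j *:
      d1 bg mu rho01 r (contract (x0 (Xi j)) w) (fun i => face mu 0 (rem1 Xi j i)) Z.
Proof.
pose F j Xi' Z := w (fun i => face mu 0 (rem1 Xi' j i)) (pcons (x0 (Xi' j)) Z).
by rewrite -(d1_sum _ (fun j => sgn K j) F).
Qed.

Hypothesis w_alt : forall Xi, alt_form r.+1 (w Xi).

Lemma Delta_d1 Xi Z :
  Delta mu q (d1 bg mu rho01 r.+1 w) Xi Z
  = \sum_(j < q.+1) sgn K j *: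
      rho_r L rho01 r.+1 (mu (x0 (Xi j))) (w (fun i => face mu 0 (rem1 Xi j i))) Z
    - d1 bg mu rho01 r (Delta mu q w) Xi Z.
Proof.
rewrite d1_Delta /Delta -sumrB; apply: eq_bigr => j _.
by rewrite (d1_pcons _ L_mu) // scalerBr.
Qed.
End DeltaContraction.

Lemma d1_Delta_1 (K : fieldType) (G H W V : lmodType K) (bg : G -> G -> G) (mu : G -> H)
    (phi : W -> V) (rho01 : H -> W -> W) (rho1 : G -> V -> W) p q (w : cochain G H W p) :
  is_lin phi -> is_bilin rho1 -> (forall x v, rho01 (mu x) v = rho1 x (phi v)) ->
  (forall Xi, alt_form 1 (w Xi)) ->
  forall Xi Z, d1 bg mu rho01 0 (Delta mu q w) Xi Z = d1_0 rho1 (Delta_1 mu phi q w) Xi Z.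
Proof.
move=> phi_lin rho1_bilin rho01_mu w_alt Xi Z.
rewrite /d1 /d1_0 /Delta /Delta_1 !big_ord1 big_ord1_cond /= addr0 scale1r rho01_mu.
rewrite (lin_sum phi_lin).
congr (rho1 _); apply: eq_bigr => j _; rewrite (linZ phi_lin); congr (_ *: phi _).
by apply: (alt_form_ext (w_alt _)) => -[|i].
Qed.

Theorem mainTheorem10 (K : fieldType) (G H W V : lmodType K)
  (bg : G -> G -> G) (bh : H -> H -> H) (mu : G -> H) (L : H -> G -> G)
  (phi : W -> V) (rho01 : H -> W -> W) (rho00 : H -> V -> V)
  (rho1 : G -> V -> W) :
  crossed_module bg bh mu L ->
  two_rep bg bh mu L phi rho01 rho00 rho1 ->
  forall (p q r : nat), (1 <= r)%N ->
  forall w : cochain G H W p, is_cochain q r w ->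
  forall (Xi : nat -> Gp G H p.+1) (Z : nat -> G),
    delta_r bg bh mu L rho01 q r (pdiff mu w) Xi Z
      - pdiff mu (delta_r bg bh mu L rho01 q r w) Xi Z
    = (if r == 1%N
       then d1_0 rho1 (Delta_1 mu phi q w) Xi Z
       else d1 bg mu rho01 r.-1 (Delta mu q w) Xi Z)
      + Delta mu q (d1 bg mu rho01 r w) Xi Z.
Proof.
move=> cm rep p q [//|r] _ w w_cochain Xi Z.
have [_ _ _ _ L_mu] := cm.
have [[phi_lin [[rho01_bilin _] [_ rho1_bilin]]] _ _ [_ rho01_mu] _] := rep.
have w_alt := cochain_alt_form w_cochain.
rewrite (delta_pdiff cm rho01_bilin w_cochain) (Delta_d1 L_mu rho01_bilin _ w_alt).
case: r w w_cochain w_alt => [|r] w _ w_alt /=; last by rewrite addrC subrK.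
by rewrite -(d1_Delta_1 bg _ phi_lin rho1_bilin rho01_mu w_alt) addrC subrK.
Qed.
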